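(* Let $\pi$ be the cyclic permutation of $\{1,\dots,6\}$ given by $1\mapsto2\mapsto4\mapsto5\mapsto3\mapsto6\mapsto1$. Then $\pi$ is a unimodal pattern with over-rotation pair $(2,6)$, its code is non-decreasing, $r_\pi=\rho(\pi)=\frac13$, and $\pi$ has no block structure over an over-twist pattern of over-rotation number $\frac13$; that is, $\pi$ is very badly ordered.
   Context: A cyclic pattern is a cyclic permutation of $\{1,\dots,n\}$ viewed as a cycle $P$ on the line; the $P$-linear map $f$ agrees with the cycle on $P$ and is affine in between; the pattern is unimodal if $f$ has exactly one turning point, a local maximum. Over-rotation pair: $2p$ is the number of $x\in P$ with $f(x)-x$ and $f^2(x)-f(x)$ of different signs, $q$ the period, $\rho(\pi)=p/q$. $r_\pi$ is the left endpoint of the over-rotation interval $[r_\pi,\frac12]$ of $f$ (closure of the set of over-rotation numbers of non-fixed periodic orbits of $f$). For the unique fixed point $a$ of $f$, write $x>_a y$ if $x<y<a$ or $x>y>a$; code: $L(x_0)=0$ at the leftmost point and $L(f(y))=L(y)+\rho(\pi)-\varphi(y)$ with $\varphi(y)=1$ if $y>a$ and $f(y)<a$, else $0$; non-decreasing means $x>_a y\Rightarrow L(x)\le L(y)$. A pattern $A$ forces $B$ if every continuous interval map with a cycle of pattern $A$ has one of pattern $B$; an over-twist is a forcing-minimal pattern among patterns of a given over-rotation number. A permutation $\pi$ of $\{1,\dots,n\}$ has block structure over a pattern $\pi'$ if there are pairwise disjoint segments $I_0,\dots,I_k$ ($k\ge1$) with $\pi(T_n\cap I_j)=T_n\cap I_{j+1}$,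 $\pi(T_n\cap I_k)=T_n\cap I_0$, $T_n=\{1,\dots,n\}$, and $\pi'$ is the pattern obtained by collapsing each block $T_n\cap I_j$ to a point. A pattern is very badly ordered if its over-rotation number equals the left endpoint of its forced over-rotation interval while it has no block structure over an over-twist pattern of the same over-rotation number. *)

From Stdlib Require Import Reals Lra Lia Arith List.
Open Scope R_scope.

Fixpoint itr {A : Type} (k : nat) (f : A -> A) (x : A) : A :=
  match k with O => x | S k' => f (itr k' f x) end.

Fixpoint nsum (k : nat) (g : nat -> nat) : nat :=
  match k with O => O | S k' => (nsum k' g + g k')%nat end.
Fixpoint rsum (k : nat) (g : nat -> R) : R :=
  match k with O => 0 | S k' => rsum k' g + g k' end.

Definition is_glb (S : R -> Prop) (m : R) : Prop :=
  (forall r, S r -> m <= r) /\ (forall m', (forall r, S r -> m' <= r) -> m' <= m).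

(** A pattern is given by its size [n] and a map on [nat] whose restriction
    to T_n = {1,..,n} is the permutation. *)
Record pattern := Pat { psize : nat ; pmap : nat -> nat }.

Definition is_cyclic_perm (P : pattern) : Prop :=
  let n := psize P in let s := pmap P in
  (1 <= n)%nat /\
  (forall i, (1 <= i <= n)%nat -> (1 <= s i <= n)%nat) /\
  (forall i, (1 <= i <= n)%nat -> exists k, (k < n)%nat /\ itr k s 1%nat = i) /\
  itr n s 1%nat = 1%nat.

Definition same_pattern (P Q : pattern) : Prop :=
  psize P = psize Q /\ forall i, (1 <= i <= psize P)%nat -> pmap P i = pmap Q i.

Definition sgn_change_nat (s : nat -> nat) (i : nat) : nat :=
  if ((Nat.ltb i (s i) && Nat.ltb (s (s i)) (s i)) ||
      (Nat.ltb (s i) i && Nat.ltb (s i) (s (s i))))%bool then 1%nat else 0%nat.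

(** number of x in P with f(x)-x, f^2(x)-f(x) of different signs (= 2p) *)
Definition sgn_count (P : pattern) : nat :=
  nsum (psize P) (fun j => sgn_change_nat (pmap P) (S j)).

Definition over_rotation_pair (P : pattern) : nat * nat :=
  (Nat.div (sgn_count P) 2, psize P).

Definition rho (P : pattern) : R :=
  INR (fst (over_rotation_pair P)) / INR (snd (over_rotation_pair P)).

Definition clamp (lo hi x : R) : R := Rmax lo (Rmin hi x).
Definition hat (i : nat) (x : R) : R := Rmax 0 (1 - Rabs (x - INR i)).

(** The P-linear map of a pattern (P = {1,...,n} ⊂ R): on [1,n] it is the
    piecewise-affine interpolation of i |-> pmap P i; outside [1,n] it is
    extended constantly (only its restriction to [1,n] is ever used). *)
Definition plin (P : pattern) (x : R) : R :=
  let y := clamp 1 (INR (psize P)) x in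
  rsum (psize P) (fun j => INR (pmap P (S j)) * hat (S j) y).

Definition strictly_monotone_on (f : R -> R) (D : R -> Prop) : Prop :=
  (forall y z, D y -> D z -> y < z -> f y < f z) \/
  (forall y z, D y -> D z -> y < z -> f y > f z).

Definition turning_point (f : R -> R) (a b x : R) : Prop :=
  a < x < b /\
  forall d, d > 0 ->
    ~ strictly_monotone_on f (fun y => a <= y <= b /\ Rabs (y - x) < d).

Definition local_max (f : R -> R) (a b x : R) : Prop :=
  exists d, d > 0 /\ forall y, a <= y <= b -> Rabs (y - x) < d -> f y <= f x.

Definition unimodal (P : pattern) : Prop :=
  let f := plin P in let b := INR (psize P) in
  exists x, turning_point f 1 b x /\ local_max f 1 b x /\
    forall y, turning_point f 1 b y -> y = x.

Definition min_period (f : R -> R) (x : R) (q : nat) : Prop :=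
  (1 <= q)%nat /\ itr q f x = x /\ forall k, (0 < k < q)%nat -> itr k f x <> x.

Definition sgn_change_R (f : R -> R) (y : R) : nat :=
  if Rlt_dec ((f y - y) * (f (f y) - f y)) 0 then 1%nat else 0%nat.

(** over-rotation number of the orbit of x (of period q): (2p)/(2q) *)
Definition orbit_orn (f : R -> R) (x : R) (q : nat) : R :=
  INR (nsum q (fun k => sgn_change_R f (itr k f x))) / (2 * INR q).

Definition OR_numbers (P : pattern) (r : R) : Prop :=
  exists x q, (2 <= q)%nat /\ 1 <= x <= INR (psize P) /\
    min_period (plin P) x q /\ r = orbit_orn (plin P) x q.

(** [r] is r_pi, the left endpoint of the over-rotation interval of the
    P-linear map (closure of OR_numbers); the left endpoint of the closure
    is the infimum. *)
Definition is_r_pi (P : pattern) (r : R) : Prop := is_glb (OR_numbers P) r.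

Definition phi (a : R) (s : nat -> nat) (y : nat) : R :=
  if Rlt_dec a (INR y) then (if Rlt_dec (INR (s y)) a then 1 else 0) else 0.

(** L(x): x = s^k(1) (1 is the leftmost point), L(1) = 0,
    L(s y) = L(y) + rho - phi(y). *)
Definition code (a : R) (P : pattern) (x : nat) : R :=
  let s := pmap P in
  rsum (psize P) (fun k =>
    if Nat.eqb (itr k s 1%nat) x
    then INR k * rho P - rsum k (fun j => phi a s (itr j s 1%nat))
    else 0).

Definition gt_a (a x y : R) : Prop := (x < y < a) \/ (a < y < x).

Definition code_nondecreasing (P : pattern) : Prop :=
  forall a, 1 <= a <= INR (psize P) -> plin P a = a ->
  forall x y, (1 <= x <= psize P)%nat -> (1 <= y <= psize P)%nat ->
    gt_a a (INR x) (INR y) -> code a P x <= code a P y.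

Definition has_cycle_of_pattern (g : R -> R) (a b : R) (B : pattern) : Prop :=
  let m := psize B in
  exists z : nat -> R,
    (forall i, (1 <= i <= m)%nat -> a <= z i <= b) /\
    (forall i, (1 <= i < m)%nat -> z i < z (S i)) /\
    (forall i, (1 <= i <= m)%nat -> g (z i) = z (pmap B i)).

(** A forces B: every continuous interval map g : [a,b] -> [a,b] with a cycle
    of pattern A has one of pattern B.  (Continuous self-maps of [a,b] are
    represented by continuous maps of R sending [a,b] into itself; every
    continuous map of [a,b] extends so.) *)
Definition forces (A B : pattern) : Prop :=
  forall (a b : R) (g : R -> R), a <= b -> continuity g ->
    (forall x, a <= x <= b -> a <= g x <= b) ->
    has_cycle_of_pattern g a b A -> has_cycle_of_pattern g a b B.

Definition over_twist (B : pattern) (r : R) : Prop :=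
  is_cyclic_perm B /\ rho B = r /\
  forall C, is_cyclic_perm C -> rho C = r -> forces B C -> same_pattern C B.

(** P has block structure over P': pairwise disjoint (nonempty-on-T_n)
    segments I_0..I_k = [lo j, hi j], k >= 1, with P(T_n ∩ I_j) = T_n ∩ I_{j+1}
    (indices mod k+1), and P' is the pattern of size k+1 obtained by collapsing
    each block to a point: beta j is the left-to-right rank of block j. *)
Definition block_structure (P P' : pattern) : Prop :=
  let n := psize P in let s := pmap P in
  exists k : nat, (1 <= k)%nat /\ psize P' = S k /\
  exists (lo hi : nat -> R) (beta : nat -> nat),
    let inI := fun j (i : nat) => lo j <= INR i <= hi j in
    let nxt := fun j => if Nat.eqb j k then 0%nat else S j in
    (forall j, (j <= k)%nat -> lo j <= hi j) /\
    (forall j j', (j <= k)%nat -> (j' <= k)%nat -> j <> j' ->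
        hi j < lo j' \/ hi j' < lo j) /\
    (forall j, (j <= k)%nat -> exists i, (1 <= i <= n)%nat /\ inI j i) /\
    (forall j i, (j <= k)%nat -> (1 <= i <= n)%nat -> inI j i -> inI (nxt j) (s i)) /\
    (forall j i', (j <= k)%nat -> (1 <= i' <= n)%nat -> inI (nxt j) i' ->
        exists i, (1 <= i <= n)%nat /\ inI j i /\ s i = i') /\
    (forall j, (j <= k)%nat -> (1 <= beta j <= S k)%nat) /\
    (forall j j', (j <= k)%nat -> (j' <= k)%nat -> hi j < lo j' -> (beta j < beta j')%nat) /\
    (forall j, (j <= k)%nat -> pmap P' (beta j) = beta (nxt j)).

Definition very_badly_ordered (P : pattern) : Prop :=
  is_r_pi P (rho P) /\
  ~ (exists P', over_twist P' (rho P) /\ block_structure P P').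

Definition pi6 : pattern :=
  Pat 6 (fun i => match i with
                  | 1 => 2 | 2 => 4 | 3 => 6 | 4 => 5 | 5 => 3 | 6 => 1
                  | _ => 0 end)%nat.

From Stdlib Require Import Reals Lra Lia.
Open Scope R_scope.

(** r_pi = 1/3: the orbit of 1 has over-rotation number 1/3, and a potential
    function on [1,6] drops by at least 2 at every step of an orbit that does
    not cross the fixed point and rises by at most 1 at a crossing step, so
    every periodic orbit crosses in at least 2/3 of its steps.

    No block structure over an over-twist: every block structure of pi6 has
    singleton blocks, hence its collapsed pattern is pi6 itself (an
    order-preserving ranking lemma).  But pi6 forces the 3-cycle 1 -> 2 -> 3,
    obtained by a fixed-point argument along the covering loop
    [z5,z6] -> [z1,z2] -> [z2,z3] -> [z5,z6]; the 3-cycle has the same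
    over-rotation number 1/3, so pi6 is not forcing-minimal. *)

Lemma itr_add {A : Type} (f : A -> A) (m n : nat) (x : A) :
  itr (m + n) f x = itr m f (itr n f x).
Proof. induction m as [|m IH]; simpl; congruence. Qed.

Lemma itr_fixed {A : Type} (f : A -> A) (m : nat) (a : A) :
  f a = a -> itr m f a = a.
Proof. intros Ha; induction m as [|m IH]; simpl; congruence. Qed.

Lemma rsum_le (q : nat) (g h : nat -> R) :
  (forall k, (k < q)%nat -> g k <= h k) -> rsum q g <= rsum q h.
Proof.
induction q as [|q IH]; simpl; intros H; [lra|].
pose proof (H q ltac:(lia)). pose proof (IH (fun k Hk => H k ltac:(lia))). lra.
Qed.

Lemma rsum_telescope (q : nat) (u : nat -> R) :
  rsum q (fun k => u (S k) - u k) = u q - u 0%nat.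
Proof. induction q as [|q IH]; simpl; [lra|]. rewrite IH. lra. Qed.

Lemma rsum_affine (q : nat) (a b : R) (c : nat -> nat) :
  rsum q (fun k => a * INR (c k) - b) = a * INR (nsum q c) - b * INR q.
Proof.
induction q as [|q IH]; simpl rsum; simpl nsum; [simpl; lra|].
rewrite IH, plus_INR, S_INR. lra.
Qed.

Lemma itr_on_points (f : R -> R) (s : nat -> nat) (n p : nat) :
  (forall i, (1 <= i <= n)%nat -> (1 <= s i <= n)%nat /\ f (INR i) = INR (s i)) ->
  (1 <= p <= n)%nat ->
  forall k, (1 <= itr k s p <= n)%nat /\ itr k f (INR p) = INR (itr k s p).
Proof.
intros Hf Hp k. induction k as [|k [Hr IH]]; simpl; [auto|].
rewrite IH. exact (Hf _ Hr).
Qed.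

Lemma cyclic_orbit_reaches (P : pattern) (p i : nat) :
  is_cyclic_perm P -> (1 <= p <= psize P)%nat -> (1 <= i <= psize P)%nat ->
  exists m, itr m (pmap P) p = i.
Proof.
intros HP Hp Hi. unfold is_cyclic_perm in HP; cbv zeta in HP.
destruct HP as (_ & _ & Hreach & Hret).
destruct (Hreach p Hp) as (a & Ha & <-). destruct (Hreach i Hi) as (b & _ & <-).
exists (b + (psize P - a))%nat.
rewrite itr_add, <- (itr_add _ (psize P - a) a). replace (psize P - a + a)%nat with (psize P) by lia.
now rewrite Hret.
Qed.

Lemma hat_cases (j : nat) (y : R) :
  ((y <= INR j - 1 \/ y >= INR j + 1) /\ hat j y = 0) \/
  (INR j - 1 <= y <= INR j /\ hat j y = y - INR j + 1) \/
  (INR j <= y <= INR j + 1 /\ hat j y = INR j + 1 - y).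
Proof.
unfold hat.
destruct (Rle_dec y (INR j - 1)).
{ left; split; [lra|]. rewrite Rabs_left1 by lra. apply Rmax_left; lra. }
destruct (Rle_dec y (INR j)).
{ right; left; split; [lra|]. rewrite Rabs_left1 by lra. rewrite Rmax_right; lra. }
destruct (Rle_dec y (INR j + 1)).
{ right; right; split; [lra|]. rewrite Rabs_right by lra. rewrite Rmax_right; lra. }
left; split; [lra|]. rewrite Rabs_right by lra. apply Rmax_left; lra.
Qed.

(** The P-linear map of pi6 on [1,6], interpolating 1,2,...,6 |-> 2,4,6,5,3,1. *)
Definition pi6_lin (y : R) : R :=
  if Rle_dec y 3 then 2 * y else if Rle_dec y 4 then 9 - y else 13 - 2 * y.

Ltac split_pi6_lin := unfold pi6_lin; repeat destruct (Rle_dec _ _); lra.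

Lemma plin_pi6 (y : R) : 1 <= y <= 6 -> plin pi6 y = pi6_lin y.
Proof.
intros Hy. unfold plin. change (psize pi6) with 6%nat. simpl INR.
replace (clamp 1 (1 + 1 + 1 + 1 + 1 + 1) y) with y
  by (unfold clamp; rewrite Rmin_right by lra; rewrite Rmax_right; lra).
simpl rsum. simpl INR.
do 6 match goal with
  | |- context [hat ?j y] =>
      destruct (hat_cases j y) as [[[?|?] ->]|[[? ->]|[? ->]]]; simpl INR in *; try lra
  end; split_pi6_lin.
Qed.

Lemma pi6_lin_incr (y z : R) : y < z <= 3 -> pi6_lin y < pi6_lin z.
Proof. intros. split_pi6_lin. Qed.

Lemma pi6_lin_decr (y z : R) : 3 <= y < z -> pi6_lin z < pi6_lin y.
Proof. intros. split_pi6_lin. Qed.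

Lemma pi6_lin_range (y : R) : 1 <= y <= 6 -> 1 <= pi6_lin y <= 6.
Proof. intros. split_pi6_lin. Qed.

Lemma pi6_fixed_point (a : R) : 1 <= a <= 6 -> pi6_lin a = a -> a = 13/3.
Proof. intros. revert H0. split_pi6_lin. Qed.

Lemma pi6_lin_right (y : R) : 1 <= y < 13/3 -> y < pi6_lin y.
Proof. intros. split_pi6_lin. Qed.

Lemma pi6_lin_left (y : R) : 13/3 < y <= 6 -> pi6_lin y < y.
Proof. intros. split_pi6_lin. Qed.

Lemma pi6_points (i : nat) : (1 <= i <= 6)%nat ->
  (1 <= pmap pi6 i <= 6)%nat /\ plin pi6 (INR i) = INR (pmap pi6 i).
Proof.
intros Hi. destruct i as [|[|[|[|[|[|[|i]]]]]]]; try lia;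
  (split; [simpl; lia|]); rewrite plin_pi6 by (simpl; lra); simpl; split_pi6_lin.
Qed.

Lemma pi6_cyclic : is_cyclic_perm pi6.
Proof.
unfold is_cyclic_perm; simpl. split; [lia|]. split; [|split; [|reflexivity]].
- intros i Hi. destruct i as [|[|[|[|[|[|[|i]]]]]]]; simpl; lia.
- intros i Hi. destruct i as [|[|[|[|[|[|[|i]]]]]]]; try lia;
  [exists 0%nat | exists 1%nat | exists 4%nat | exists 2%nat | exists 3%nat | exists 5%nat];
  (split; [lia|reflexivity]).
Qed.

Lemma pi6_size : INR (psize pi6) = 6.
Proof. simpl. lra. Qed.

Lemma pi6_pair : over_rotation_pair pi6 = (2%nat, 6%nat).
Proof. reflexivity. Qed.

Lemma pi6_rho : rho pi6 = 1 / 3.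
Proof. unfold rho. rewrite pi6_pair. simpl. field. Qed.

(** Near 3 the map rises on the left and falls on the right. *)
Lemma pi6_turning_at_3 : turning_point (plin pi6) 1 6 3.
Proof.
split; [lra|]. intros d Hd [Hincr|Hdecr].
- set (e := Rmin (d / 2) 1).
  assert (0 < e <= 1 /\ e <= d / 2) as He
    by (unfold e; split; [split; [apply Rmin_glb_lt|apply Rmin_r]|apply Rmin_l]; lra).
  assert (Hlt : plin pi6 3 < plin pi6 (3 + e)).
  { apply Hincr; try split; try lra; unfold Rabs; destruct (Rcase_abs _); lra. }
  rewrite !plin_pi6 in Hlt by lra. pose proof (pi6_lin_decr 3 (3 + e)). lra.
- set (e := Rmin (d / 2) 1).
  assert (0 < e <= 1 /\ e <= d / 2) as He
    by (unfold e; split; [split; [apply Rmin_glb_lt|apply Rmin_r]|apply Rmin_l]; lra).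
  assert (Hgt : plin pi6 (3 - e) > plin pi6 3).
  { apply Hdecr; try split; try lra; unfold Rabs; destruct (Rcase_abs _); lra. }
  rewrite !plin_pi6 in Hgt by lra. pose proof (pi6_lin_incr (3 - e) 3). lra.
Qed.

(** Away from 3 the map is strictly monotone on a neighbourhood. *)
Lemma pi6_no_other_turning (y : R) : turning_point (plin pi6) 1 6 y -> y = 3.
Proof.
intros [Hy Hn].
destruct (Rtotal_order y 3) as [Hlt|[Heq|Hgt]]; [exfalso| exact Heq |exfalso].
- apply (Hn (3 - y)); [lra|]. left. intros z w [Hz Hzd] [Hw Hwd] Hzw.
  apply Rabs_def2 in Hzd. apply Rabs_def2 in Hwd.
  rewrite !plin_pi6 by lra. apply pi6_lin_incr; lra.
- apply (Hn (y - 3)); [lra|]. right. intros z w [Hz Hzd] [Hw Hwd] Hzw.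
  apply Rabs_def2 in Hzd. apply Rabs_def2 in Hwd.
  rewrite !plin_pi6 by lra. apply Rlt_gt, pi6_lin_decr; lra.
Qed.

Lemma pi6_unimodal : unimodal pi6.
Proof.
unfold unimodal. cbv zeta. rewrite pi6_size.
exists 3. split; [exact pi6_turning_at_3|split; [|exact pi6_no_other_turning]].
exists 1. split; [lra|]. intros y Hy _. rewrite !plin_pi6 by lra.
unfold pi6_lin at 2. destruct (Rle_dec 3 3); [|lra]. split_pi6_lin.
Qed.

Definition pi6_code (i : nat) : R :=
  match i with
  | 2%nat | 3%nat => 1/3 | 4%nat | 6%nat => 2/3 | 5%nat => 1 | _ => 0
  end.

Lemma pi6_code_values (i : nat) : (1 <= i <= 6)%nat -> code (13/3) pi6 i = pi6_code i.
Proof.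
intros Hi. unfold code, phi. rewrite pi6_rho.
destruct i as [|[|[|[|[|[|[|i]]]]]]]; try lia; simpl;
  repeat destruct (Rlt_dec _ _); lra.
Qed.

Lemma pi6_code_nondecreasing : code_nondecreasing pi6.
Proof.
intros a Ha Hfix x y Hx Hy.
rewrite pi6_size in Ha. change (psize pi6) with 6%nat in Hx, Hy.
rewrite plin_pi6 in Hfix by lra. apply pi6_fixed_point in Hfix; [subst a|lra].
rewrite (pi6_code_values x Hx), (pi6_code_values y Hy).
destruct x as [|[|[|[|[|[|[|x]]]]]]]; try lia;
destruct y as [|[|[|[|[|[|[|y]]]]]]]; try lia;
unfold gt_a, pi6_code; simpl INR; lra.
Qed.

Lemma orbit_avoids_fixed_point (f : R -> R) (x a : R) (q : nat) :
  (2 <= q)%nat -> min_period f x q -> f a = a ->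
  forall k, (k <= q)%nat -> itr k f x <> a.
Proof.
intros Hq (_ & Hper & Hmin) Ha k Hk Hka.
assert (Hx : x = a).
{ rewrite <- Hper. replace q with (q - k + k)%nat by lia.
  rewrite itr_add, Hka. apply itr_fixed, Ha. }
apply (Hmin 1%nat); [lia|]. simpl. rewrite Hx. exact Ha.
Qed.

Lemma potential_bound (f V : R -> R) (c : R -> nat) (x a b : R) (q : nat) :
  itr q f x = x ->
  (forall k, (k < q)%nat ->
     V (f (itr k f x)) - V (itr k f x) <= a * INR (c (itr k f x)) - b) ->
  b * INR q <= a * INR (nsum q (fun k => c (itr k f x))).
Proof.
intros Hper Hstep.
assert (Hsum := rsum_le q (fun k => V (itr (S k) f x) - V (itr k f x))
                          (fun k => a * INR (c (itr k f x)) - b) Hstep).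
rewrite (rsum_telescope q (fun k => V (itr k f x))), rsum_affine, Hper in Hsum.
simpl in Hsum. lra.
Qed.

Definition crosses (y : R) : Prop :=
  (y < 13/3 < pi6_lin y) \/ (pi6_lin y < 13/3 < y).

(** The potential: it drops by at least 2 along a step that does not cross
    13/3 and rises by at most 1 along a crossing step. *)
Definition potential (y : R) : R :=
  if Rlt_dec y 2 then 0 else if Rlt_dec y 4 then -2 else if Rlt_dec y (13/3) then -4
  else if Rle_dec y 5 then -3 else -1.

Lemma potential_step (y : R) : 1 <= y <= 6 -> y <> 13/3 -> pi6_lin y <> 13/3 ->
  potential (pi6_lin y) - potential y <= -2 \/
  (crosses y /\ potential (pi6_lin y) - potential y <= 1).
Proof.
intros Hy Hya Hfa. unfold crosses, potential, pi6_lin in *.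
destruct (Rle_dec y 3); try destruct (Rle_dec y 4);
repeat destruct (Rlt_dec _ _); repeat destruct (Rle_dec _ _);
first [left; lra | right; split; [first [left; lra | right; lra] | lra] | lra].
Qed.

Lemma crossing_changes_sign (y : R) : 1 <= y <= 6 -> crosses y ->
  sgn_change_R (plin pi6) y = 1%nat.
Proof.
intros Hy Hc. pose proof (pi6_lin_range y Hy).
unfold sgn_change_R. rewrite (plin_pi6 y), (plin_pi6 (pi6_lin y)) by lra.
destruct (Rlt_dec _ _); [reflexivity|exfalso].
destruct Hc as [Hc|Hc].
- pose proof (pi6_lin_left (pi6_lin y)). nra.
- pose proof (pi6_lin_right (pi6_lin y)). nra.
Qed.

Lemma potential_step_bound (y : R) :
  1 <= y <= 6 -> y <> 13/3 -> plin pi6 y <> 13/3 ->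
  potential (plin pi6 y) - potential y <= 3 * INR (sgn_change_R (plin pi6) y) - 2.
Proof.
intros Hy Hya Hfa. rewrite (plin_pi6 y Hy) in *.
destruct (potential_step y Hy Hya Hfa) as [H|[Hc H]].
- pose proof (pos_INR (sgn_change_R (plin pi6) y)). lra.
- rewrite (crossing_changes_sign y Hy Hc). simpl. lra.
Qed.

Lemma pi6_OR_lower_bound (r : R) : OR_numbers pi6 r -> 1/3 <= r.
Proof.
intros (x & q & Hq & Hx & Hper & ->). rewrite pi6_size in Hx.
assert (Hfix : plin pi6 (13/3) = 13/3) by (rewrite plin_pi6 by lra; split_pi6_lin).
assert (Havoid := orbit_avoids_fixed_point _ x _ q Hq Hper Hfix).
assert (Hin : forall k, 1 <= itr k (plin pi6) x <= 6).
{ induction k as [|k IH]; simpl; [lra|]. rewrite plin_pi6 by lra. now apply pi6_lin_range. }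
destruct Hper as (_ & Hret & _).
assert (Hb := potential_bound (plin pi6) potential (sgn_change_R (plin pi6)) x 3 2 q Hret
  (fun k Hk => potential_step_bound _ (Hin k) (Havoid k ltac:(lia)) (Havoid (S k) ltac:(lia)))).
assert (HQ : 2 <= INR q) by (replace 2 with (INR 2) by (simpl; lra); apply le_INR; lia).
unfold orbit_orn. apply Rmult_le_reg_r with (2 * INR q); [lra|].
field_simplify; [lra|lra].
Qed.

Lemma pi6_OR_one_third : OR_numbers pi6 (1/3).
Proof.
assert (Horb := itr_on_points (plin pi6) (pmap pi6) 6 1 pi6_points ltac:(lia)).
assert (Hsgn : forall k, sgn_change_R (plin pi6) (itr k (plin pi6) (INR 1)) =
                         sgn_change_nat (pmap pi6) (itr k (pmap pi6) 1%nat)).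
{ intros k. destruct (Horb k) as [Hr ->]. unfold sgn_change_R.
  destruct (pi6_points _ Hr) as [Hr1 ->]. destruct (pi6_points _ Hr1) as [_ ->].
  set (p := itr k (pmap pi6) 1%nat) in *.
  destruct p as [|[|[|[|[|[|[|p]]]]]]]; try lia; simpl;
    destruct (Rlt_dec _ _); first [reflexivity | exfalso; lra]. }
exists (INR 1), 6%nat. rewrite pi6_size. split; [lia|]. split; [simpl; lra|]. split.
- split; [lia|]. split.
  + destruct (Horb 6%nat) as [_ ->]. reflexivity.
  + intros k Hk. destruct (Horb k) as [_ ->]. intros E. apply INR_eq in E.
    destruct k as [|[|[|[|[|[|k]]]]]]; try lia; discriminate E.
- unfold orbit_orn. cbn [nsum]. rewrite !Hsgn. simpl. field.
Qed.

Lemma pi6_r_pi : is_r_pi pi6 (1/3).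
Proof.
split; [exact pi6_OR_lower_bound|]. intros m Hm. exact (Hm _ pi6_OR_one_third).
Qed.

Lemma clamp_cases (lo hi x : R) : lo <= hi ->
  (x <= lo /\ clamp lo hi x = lo) \/ (lo <= x <= hi /\ clamp lo hi x = x) \/
  (hi <= x /\ clamp lo hi x = hi).
Proof.
intros H. unfold clamp, Rmax, Rmin.
destruct (Rle_dec hi x); destruct (Rle_dec lo x); destruct (Rle_dec lo hi);
  destruct (Rle_dec x hi); try lra; auto.
Qed.

Lemma clamp_in (lo hi x : R) : lo <= hi -> lo <= clamp lo hi x <= hi.
Proof. intros H. destruct (clamp_cases lo hi x H) as [[_ ->]|[[? ->]|[_ ->]]]; lra. Qed.

Lemma clamp_interior (lo hi x : R) : lo <= hi ->
  clamp lo hi x <> lo -> clamp lo hi x <> hi -> clamp lo hi x = x /\ lo <= x <= hi.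
Proof. intros H. destruct (clamp_cases lo hi x H) as [[_ ->]|[[? ->]|[_ ->]]]; tauto. Qed.

Lemma clamp_continuous (lo hi : R) : lo <= hi -> continuity (clamp lo hi).
Proof.
intros H x eps Heps. exists eps. split; [exact Heps|]. intros y [_ Hy].
simpl in *. unfold R_dist in *. apply Rle_lt_trans with (Rabs (y - x)); [|exact Hy].
destruct (clamp_cases lo hi x H) as [[? ->]|[[? ->]|[? ->]]];
destruct (clamp_cases lo hi y H) as [[? ->]|[[? ->]|[? ->]]];
unfold Rabs; repeat destruct (Rcase_abs _); lra.
Qed.

Lemma continuity_post (f h : R -> R) :
  continuity h -> continuity f -> continuity (fun x => h (f x)).
Proof. intros Hh Hf. exact (continuity_comp f h Hf Hh). Qed.

(** Covering loop of length 3: if g maps I1 = [a1,b1] over I2 = [a2,b2],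
    I2 over I3 = [a3,b3] (both orientation preserving) and I3 over I1
    (orientation reversing), then some p in I3 has g(p) in I1, g^2(p) in I2
    and g^3(p) = p.  The point p is a fixed point of the continuous map
    clamp_I3 o g o clamp_I2 o g o clamp_I1 o g, whose clamps cannot be
    active because each end of the loop is forced to the opposite end. *)
Lemma covering_loop3 (g : R -> R) (a1 b1 a2 b2 a3 b3 : R) :
  continuity g -> a1 < b1 -> a2 < b2 -> a3 < b3 ->
  g a1 <= a2 -> b2 <= g b1 -> g a2 <= a3 -> b3 <= g b2 -> b1 <= g a3 -> g b3 <= a1 ->
  exists p, a3 <= p <= b3 /\ a1 <= g p <= b1 /\ a2 <= g (g p) <= b2 /\ g (g (g p)) = p.
Proof.
intros Hg H1 H2 H3 Ga1 Gb1 Ga2 Gb2 Ga3 Gb3.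
set (Phi := fun x => clamp a3 b3 (g (clamp a2 b2 (g (clamp a1 b1 (g x)))))).
assert (HPhi : continuity (fun x => Phi x - x)).
{ apply continuity_minus; [|apply derivable_continuous, derivable_id].
  unfold Phi.
  apply (continuity_post _ (clamp a3 b3)); [apply clamp_continuous; lra|].
  apply (continuity_post _ g Hg).
  apply (continuity_post _ (clamp a2 b2)); [apply clamp_continuous; lra|].
  apply (continuity_post _ g Hg).
  apply (continuity_post _ (clamp a1 b1)); [apply clamp_continuous; lra|].
  exact Hg. }
destruct (IVT_cor (fun x => Phi x - x) a3 b3 HPhi ltac:(lra)) as (p & Hp & Hp0).
{ pose proof (clamp_in a3 b3 (g (clamp a2 b2 (g (clamp a1 b1 (g a3))))) ltac:(lra)).
  pose proof (clamp_in a3 b3 (g (clamp a2 b2 (g (clamp a1 b1 (g b3))))) ltac:(lra)).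
  unfold Phi. nra. }
assert (Hfix : Phi p = p) by lra. clear Hp0. unfold Phi in Hfix.
set (u1 := clamp a1 b1 (g p)) in *. set (u2 := clamp a2 b2 (g u1)) in *.
assert (Ha1 : u1 = a1 -> u2 = a2).
{ intros E. unfold u2. rewrite E. destruct (clamp_cases a2 b2 (g a1)) as [[_ ->]|[[? ->]|[? ->]]]; lra. }
assert (Hb1 : u1 = b1 -> u2 = b2).
{ intros E. unfold u2. rewrite E. destruct (clamp_cases a2 b2 (g b1)) as [[? ->]|[[? ->]|[_ ->]]]; lra. }
assert (Ha2 : u2 = a2 -> p = a3).
{ intros E. rewrite <- Hfix, E. destruct (clamp_cases a3 b3 (g a2)) as [[_ ->]|[[? ->]|[? ->]]]; lra. }
assert (Hb2 : u2 = b2 -> p = b3).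
{ intros E. rewrite <- Hfix, E. destruct (clamp_cases a3 b3 (g b2)) as [[? ->]|[[? ->]|[_ ->]]]; lra. }
assert (Ha3 : p <> a3).
{ intros E. assert (u1 = b1).
  { unfold u1. rewrite E. destruct (clamp_cases a1 b1 (g a3)) as [[? ->]|[[? ->]|[_ ->]]]; lra. }
  pose proof (Hb2 (Hb1 H)). lra. }
assert (Hb3 : p <> b3).
{ intros E. assert (u1 = a1).
  { unfold u1. rewrite E. destruct (clamp_cases a1 b1 (g b3)) as [[_ ->]|[[? ->]|[? ->]]]; lra. }
  pose proof (Ha2 (Ha1 H)). lra. }
destruct (clamp_interior a3 b3 (g u2) ltac:(lra)) as [E3 _]; [congruence|congruence|].
destruct (clamp_interior a2 b2 (g u1) ltac:(lra)) as [E2 R2];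
  [intros E; apply Ha3, Ha2, E | intros E; apply Hb3, Hb2, E |].
destruct (clamp_interior a1 b1 (g p) ltac:(lra)) as [E1 R1];
  [intros E; apply Ha3, Ha2, Ha1, E | intros E; apply Hb3, Hb2, Hb1, E |].
fold u1 in E1, R1 |- *. fold u2 in E2 |- *.
exists p. rewrite <- E1, <- E2 in *. repeat split; try lra; congruence.
Qed.

Lemma forces_same_pattern (A A' B : pattern) :
  same_pattern A A' -> forces A B -> forces A' B.
Proof.
intros [Hsz Hval] HAB a b g Hab Hg Hinv (z & Hz & Hinc & Himg).
apply (HAB a b g Hab Hg Hinv). exists z.
rewrite Hsz. split; [exact Hz|split; [exact Hinc|]].
intros i Hi. rewrite Hval by lia. exact (Himg i Hi).
Qed.

Definition C3 : pattern :=
  Pat 3 (fun i => match i with 1 => 2 | 2 => 3 | 3 => 1 | _ => 0 end)%nat.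

Lemma C3_cyclic : is_cyclic_perm C3.
Proof.
unfold is_cyclic_perm; simpl. split; [lia|]. split; [|split; [|reflexivity]].
- intros i Hi. destruct i as [|[|[|[|i]]]]; simpl; lia.
- intros i Hi. destruct i as [|[|[|[|i]]]]; try lia;
  [exists 0%nat | exists 1%nat | exists 2%nat]; (split; [lia|reflexivity]).
Qed.

Lemma C3_rho : rho C3 = 1 / 3.
Proof.
unfold rho. replace (over_rotation_pair C3) with (1%nat, 3%nat) by reflexivity.
simpl. field.
Qed.

(** A cycle z1 < ... < z6 of pattern pi6 gives the covering loop
    [z5,z6] -> [z1,z2] -> [z2,z3] -> [z5,z6], hence a 3-cycle. *)
Lemma pi6_forces_C3 : forces pi6 C3.
Proof.
intros a b g Hab Hg _ (z & Hz & Hinc & Himg). simpl in Hz, Hinc, Himg.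
pose proof (Hz 1%nat ltac:(lia)). pose proof (Hz 6%nat ltac:(lia)).
pose proof (Hinc 1%nat ltac:(lia)). pose proof (Hinc 2%nat ltac:(lia)).
pose proof (Hinc 3%nat ltac:(lia)). pose proof (Hinc 4%nat ltac:(lia)).
pose proof (Hinc 5%nat ltac:(lia)).
pose proof (Himg 1%nat ltac:(lia)) as G1. pose proof (Himg 2%nat ltac:(lia)) as G2.
pose proof (Himg 3%nat ltac:(lia)) as G3. pose proof (Himg 5%nat ltac:(lia)) as G5.
pose proof (Himg 6%nat ltac:(lia)) as G6. simpl in G1, G2, G3, G5, G6.
destruct (covering_loop3 g (z 1%nat) (z 2%nat) (z 2%nat) (z 3%nat) (z 5%nat) (z 6%nat) Hg)
  as (p & Hp & Hp1 & Hp2 & Hp3); try lra.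
assert (Hlt : g p < g (g p)).
{ destruct (Req_dec (g p) (z 2%nat)) as [E|E]; [|lra].
  rewrite E, G2 in Hp2. lra. }
exists (fun i => match i with 1 => g p | 2 => g (g p) | _ => p end)%nat.
simpl. split; [|split].
- intros i Hi. destruct i as [|[|[|[|i]]]]; try lia; lra.
- intros i Hi. destruct i as [|[|[|[|i]]]]; try lia; lra.
- intros i Hi. destruct i as [|[|[|[|i]]]]; try lia; auto.
Qed.

Definition in_block (lo hi : nat -> R) (j i : nat) : Prop := lo j <= INR i <= hi j.

Definition next_block (k j : nat) : nat := if Nat.eqb j k then 0%nat else S j.

Record block_system (P : pattern) (k : nat) (lo hi : nat -> R) : Prop := {
  bs_several : (1 <= k)%nat;
  bs_disjoint : forall j j', (j <= k)%nat -> (j' <= k)%nat -> j <> j' ->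
    hi j < lo j' \/ hi j' < lo j;
  bs_forward : forall j i, (j <= k)%nat -> (1 <= i <= psize P)%nat ->
    in_block lo hi j i -> in_block lo hi (next_block k j) (pmap P i) }.

Lemma next_block_range (k j : nat) : (1 <= k)%nat -> (j <= k)%nat ->
  (next_block k j <= k)%nat /\ next_block k j <> j.
Proof. intros. unfold next_block. destruct (Nat.eqb_spec j k); lia. Qed.

Lemma itr_next_block (k m : nat) : (m <= k)%nat -> itr m (next_block k) 0%nat = m.
Proof.
induction m as [|m IH]; intros Hm; simpl; [reflexivity|].
rewrite IH by lia. unfold next_block. destruct (Nat.eqb_spec m k); lia.
Qed.

Lemma itr_next_block_period (k : nat) : itr (S k) (next_block k) 0%nat = 0%nat.
Proof. simpl. rewrite itr_next_block by lia. unfold next_block. now rewrite Nat.eqb_refl. Qed.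

Lemma in_block_between (lo hi : nat -> R) (j i i' m : nat) :
  in_block lo hi j i -> in_block lo hi j i' -> (i <= m <= i')%nat -> in_block lo hi j m.
Proof.
unfold in_block. intros H1 H2 Hm.
pose proof (le_INR i m ltac:(lia)). pose proof (le_INR m i' ltac:(lia)). lra.
Qed.

Section BlockSystem.

Variables (P : pattern) (k : nat) (lo hi : nat -> R).
Hypothesis Hbs : block_system P k lo hi.

Lemma block_unique (j j' i : nat) : (j <= k)%nat -> (j' <= k)%nat ->
  in_block lo hi j i -> in_block lo hi j' i -> j = j'.
Proof.
unfold in_block. intros Hj Hj' H1 H2. destruct (Nat.eq_dec j j') as [E|E]; [exact E|].
destruct (bs_disjoint _ _ _ _ Hbs j j' Hj Hj' E); lra.
Qed.

Lemma block_not_invariant (j i : nat) : (j <= k)%nat -> (1 <= i <= psize P)%nat ->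
  in_block lo hi j i -> in_block lo hi j (pmap P i) -> False.
Proof.
intros Hj Hi H1 H2.
destruct (next_block_range k j (bs_several _ _ _ _ Hbs) Hj) as [Hn Hne].
exact (Hne (block_unique _ _ _ Hn Hj (bs_forward _ _ _ _ Hbs j i Hj Hi H1) H2)).
Qed.

Lemma blocks_ordered (j j' i i' : nat) : (j <= k)%nat -> (j' <= k)%nat -> j <> j' ->
  in_block lo hi j i -> in_block lo hi j' i' -> (i < i')%nat -> hi j < lo j'.
Proof.
unfold in_block. intros Hj Hj' Hne H1 H2 Hii. pose proof (lt_INR i i' Hii).
destruct (bs_disjoint _ _ _ _ Hbs j j' Hj Hj' Hne); lra.
Qed.

Hypothesis HP : is_cyclic_perm P.

Lemma block_orbit (p : nat) : (1 <= p <= psize P)%nat -> in_block lo hi 0 p ->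
  forall m, (itr m (next_block k) 0 <= k)%nat /\ (1 <= itr m (pmap P) p <= psize P)%nat /\
    in_block lo hi (itr m (next_block k) 0%nat) (itr m (pmap P) p).
Proof.
intros Hp H0 m. induction m as [|m (IH1 & IH2 & IH3)]; simpl; [split; [lia|split; [exact Hp|exact H0]]|].
destruct HP as (_ & Hrange & _).
split; [apply next_block_range; [exact (bs_several _ _ _ _ Hbs)|exact IH1]|].
split; [exact (Hrange _ IH2)|]. exact (bs_forward _ _ _ _ Hbs _ _ IH1 IH2 IH3).
Qed.

Lemma blocks_cover (p : nat) : (1 <= p <= psize P)%nat -> in_block lo hi 0 p ->
  forall i, (1 <= i <= psize P)%nat -> exists j, (j <= k)%nat /\ in_block lo hi j i.
Proof.
intros Hp H0 i Hi. destruct (cyclic_orbit_reaches P p i HP Hp Hi) as (m & <-).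
destruct (block_orbit p Hp H0 m) as (Hm & _ & Hin). eauto.
Qed.

End BlockSystem.

Lemma order_preserving_rank (N : nat) (J : nat -> Prop) (mem : nat -> nat -> Prop)
    (rank : nat -> nat) :
  (forall i, (1 <= i <= N)%nat -> exists j, J j /\ mem j i) ->
  (forall j, J j -> (1 <= rank j <= N)%nat) ->
  (forall j j' i i', J j -> J j' -> mem j i -> mem j' i' ->
     (1 <= i)%nat -> (i < i')%nat -> (i' <= N)%nat -> (rank j < rank j')%nat) ->
  forall j i, J j -> (1 <= i <= N)%nat -> mem j i -> rank j = i.
Proof.
intros Hcov Hrng Hord.
assert (Hup : forall i, (1 <= i <= N)%nat -> forall j, J j -> mem j i -> (i <= rank j)%nat).
{ induction i as [|i IH]; intros Hi j Hj Hm; [lia|].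
  destruct (Nat.eq_dec i 0) as [->|Hi0]; [specialize (Hrng j Hj); lia|].
  destruct (Hcov i ltac:(lia)) as (j' & Hj' & Hm').
  specialize (IH ltac:(lia) j' Hj' Hm').
  specialize (Hord j' j i (S i) Hj' Hj Hm' Hm ltac:(lia) ltac:(lia) ltac:(lia)). lia. }
assert (Hdown : forall d i, i = (N - d)%nat -> (1 <= i <= N)%nat ->
                  forall j, J j -> mem j i -> (rank j <= i)%nat).
{ induction d as [|d IH]; intros i -> Hi j Hj Hm; [specialize (Hrng j Hj); lia|].
  destruct (Hcov (S (N - S d)) ltac:(lia)) as (j' & Hj' & Hm').
  specialize (IH (S (N - S d)) ltac:(lia) ltac:(lia) j' Hj' Hm').
  specialize (Hord j j' (N - S d)%nat (S (N - S d)) Hj Hj' Hm Hm' ltac:(lia) ltac:(lia) ltac:(lia)).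
  lia. }
intros j i Hj Hi Hm.
pose proof (Hup i Hi j Hj Hm). pose proof (Hdown (N - i)%nat i ltac:(lia) Hi j Hj Hm). lia.
Qed.

Lemma pi6_period (p : nat) : (1 <= p <= 6)%nat -> itr 6 (pmap pi6) p = p.
Proof. intros Hp. destruct p as [|[|[|[|[|[|[|p]]]]]]]; try lia; reflexivity. Qed.

Lemma pi6_no_shorter_period (p m : nat) : (1 <= p <= 6)%nat -> (1 <= m <= 5)%nat ->
  itr m (pmap pi6) p <> p.
Proof.
intros Hp Hm. destruct p as [|[|[|[|[|[|[|p]]]]]]]; try lia;
  destruct m as [|[|[|[|[|[|m]]]]]]; try lia; discriminate.
Qed.

Section Pi6Blocks.

Variables (k : nat) (lo hi : nat -> R).
Hypothesis Hbs : block_system pi6 k lo hi.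

Let fwd := bs_forward _ _ _ _ Hbs.
Let no_fix := block_not_invariant _ _ _ _ Hbs.

(** No block of pi6 contains two consecutive points: following the images
    of the pair, some block would contain a point and its image. *)
Lemma pi6_block_no_consecutive (j m : nat) : (j <= k)%nat -> (1 <= m <= 5)%nat ->
  in_block lo hi j m -> in_block lo hi j (S m) -> False.
Proof.
intros Hj Hm H1 H2. pose proof (bs_several _ _ _ _ Hbs) as Hk.
destruct (next_block_range k j Hk Hj) as [Hn _].
destruct (next_block_range k (next_block k j) Hk Hn) as [Hnn _].
destruct m as [|[|[|[|[|[|m]]]]]]; try lia.
- (* 1 and 2 = pi(1) *) exact (no_fix j 1 Hj ltac:(simpl; lia) H1 H2).
- (* images 4 and 6 enclose 5 = pi(4) *)
  pose proof (fwd j 2 Hj ltac:(simpl; lia) H1) as A.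
  pose proof (fwd j 3 Hj ltac:(simpl; lia) H2) as B.
  exact (no_fix _ 4 Hn ltac:(simpl; lia) A (in_block_between _ _ _ 4 6 5 A B ltac:(lia))).
- (* images 6 and 5, then 1 and 3 enclose 2 = pi(1) *)
  pose proof (fwd j 3 Hj ltac:(simpl; lia) H1) as A.
  pose proof (fwd j 4 Hj ltac:(simpl; lia) H2) as B.
  pose proof (fwd _ 6 Hn ltac:(simpl; lia) A) as A'.
  pose proof (fwd _ 5 Hn ltac:(simpl; lia) B) as B'.
  exact (no_fix _ 1 Hnn ltac:(simpl; lia) A' (in_block_between _ _ _ 1 3 2 A' B' ltac:(lia))).
- (* 4 and 5 = pi(4) *) exact (no_fix j 4 Hj ltac:(simpl; lia) H1 H2).
- (* images 3 and 1 enclose 2 = pi(1) *)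
  pose proof (fwd j 5 Hj ltac:(simpl; lia) H1) as A.
  pose proof (fwd j 6 Hj ltac:(simpl; lia) H2) as B.
  exact (no_fix _ 1 Hn ltac:(simpl; lia) B (in_block_between _ _ _ 1 3 2 B A ltac:(lia))).
Qed.

Lemma pi6_block_singleton (j i i' : nat) : (j <= k)%nat ->
  (1 <= i <= 6)%nat -> (1 <= i' <= 6)%nat ->
  in_block lo hi j i -> in_block lo hi j i' -> i = i'.
Proof.
intros Hj Hi Hi' H1 H2.
destruct (Nat.lt_total i i') as [Hlt|[Heq|Hgt]]; [exfalso| exact Heq |exfalso].
- apply (pi6_block_no_consecutive j i Hj ltac:(lia) H1).
  exact (in_block_between _ _ _ i i' (S i) H1 H2 ltac:(lia)).
- apply (pi6_block_no_consecutive j i' Hj ltac:(lia) H2).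
  exact (in_block_between _ _ _ i' i (S i') H2 H1 ltac:(lia)).
Qed.

Lemma pi6_block_count (p : nat) : (1 <= p <= 6)%nat -> in_block lo hi 0 p -> k = 5%nat.
Proof.
intros Hp H0. pose proof (bs_several _ _ _ _ Hbs) as Hk.
pose proof (block_orbit _ _ _ _ Hbs pi6_cyclic p Hp H0) as Horb.
destruct (Nat.lt_total k 5) as [Hlt|[Heq|Hgt]]; [exfalso| exact Heq |exfalso].
- destruct (Horb (S k)) as (_ & Hr & Hin). rewrite itr_next_block_period in Hin.
  apply (pi6_no_shorter_period p (S k) Hp ltac:(lia)).
  exact (pi6_block_singleton 0 _ _ ltac:(lia) Hr Hp Hin H0).
- destruct (Horb 6%nat) as (_ & _ & Hin).
  rewrite itr_next_block, pi6_period in Hin by lia.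
  pose proof (block_unique _ _ _ _ Hbs 6 0 p ltac:(lia) ltac:(lia) Hin H0). lia.
Qed.

End Pi6Blocks.

Lemma pi6_block_quotient (P' : pattern) : block_structure pi6 P' -> same_pattern pi6 P'.
Proof.
intros (k & Hk & Hsz & lo & hi & rank & BS). cbv zeta in BS.
destruct BS as (_ & Hdis & Hne & Hfw & _ & Hrng & Hord & Hmap).
assert (Hbs : block_system pi6 k lo hi) by (constructor; assumption).
destruct (Hne 0%nat ltac:(lia)) as (p & Hp & H0).
pose proof (pi6_block_count k lo hi Hbs p Hp H0) as ->.
assert (Hcov := blocks_cover _ _ _ _ Hbs pi6_cyclic p Hp H0).
assert (Hrank : forall j i, (j <= 5)%nat -> (1 <= i <= 6)%nat -> in_block lo hi j i -> rank j = i).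
{ apply (order_preserving_rank 6 (fun j => (j <= 5)%nat) (in_block lo hi)); [exact Hcov|exact Hrng|].
  intros j j' i i' Hj Hj' H1 H2 Hi Hii Hi'. apply Hord; [exact Hj|exact Hj'|].
  apply (blocks_ordered _ _ _ _ Hbs j j' i i' Hj Hj'); [|exact H1|exact H2|exact Hii].
  intros <-. pose proof (pi6_block_singleton 5 lo hi Hbs j i i' Hj ltac:(lia) ltac:(lia) H1 H2). lia. }
split; [exact (eq_sym Hsz)|]. intros i Hi.
destruct (Hcov i Hi) as (j & Hj & Hin).
destruct (next_block_range 5 j ltac:(lia) Hj) as [Hn _].
assert (Himg := Hfw j i Hj Hi Hin). destruct pi6_cyclic as (_ & Hrange & _).
rewrite <- (Hrank _ _ Hn (Hrange i Hi) Himg), <- (Hrank j i Hj Hi Hin).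
exact (eq_sym (Hmap j Hj)).
Qed.

(** A block structure of pi6 over an over-twist P' of over-rotation number 1/3
    would make P' = pi6; but pi6 forces the 3-cycle C3 of the same
    over-rotation number, contradicting forcing-minimality. *)
Lemma pi6_no_block_structure_over_over_twist :
  ~ (exists P', over_twist P' (1 / 3) /\ block_structure pi6 P').
Proof.
intros (P' & (_ & _ & Hmin) & Hblock).
assert (Hsame := pi6_block_quotient P' Hblock).
destruct (Hmin C3 C3_cyclic C3_rho (forces_same_pattern _ _ _ Hsame pi6_forces_C3))
  as [Hsize _].
destruct Hsame as [Hsize' _]. simpl in Hsize, Hsize'. lia.
Qed.

Theorem mainTheorem8 :
  is_cyclic_perm pi6 /\
  unimodal pi6 /\
  over_rotation_pair pi6 = (2%nat, 6%nat) /\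
  code_nondecreasing pi6 /\
  is_r_pi pi6 (rho pi6) /\ rho pi6 = 1 / 3 /\
  ~ (exists P', over_twist P' (1 / 3) /\ block_structure pi6 P') /\
  very_badly_ordered pi6.
Proof.
rewrite pi6_rho.
split; [exact pi6_cyclic|]. split; [exact pi6_unimodal|].
split; [exact pi6_pair|]. split; [exact pi6_code_nondecreasing|].
split; [exact pi6_r_pi|]. split; [reflexivity|].
split; [exact pi6_no_block_structure_over_over_twist|].
unfold very_badly_ordered. rewrite pi6_rho.
split; [exact pi6_r_pi|exact pi6_no_block_structure_over_over_twist].
Qed.
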